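(* A function $f:X\to Y$ between topological spaces is strongly-$SC^*$-closed if and only if for every subset $J\subseteq Y$ and every $SC^*$-open set $M$ in $X$ with $f^{-1}(J)\subseteq M$, there exists an $SC^*$-open set $N$ in $Y$ with $J\subseteq N$ and $f^{-1}(N)\subseteq M$.
   Context: For $A\subseteq Z$ in a topological space $Z$: $A$ is semi-open if $A\subseteq cl(int(A))$, semi-closed if its complement is semi-open; $scl(A)$ is the smallest semi-closed set containing $A$. $A$ is $c^*$-open if $int(cl(A))\subseteq A\subseteq cl(int(A))$. $A$ is $SC^*$-closed if $scl(A)\subseteq U$ whenever $A\subseteq U$ and $U$ is $c^*$-open; $A$ is $SC^*$-open if $Z\setminus A$ is $SC^*$-closed. A function $f:X\to Y$ is strongly-$SC^*$-closed if $f(M)$ is $SC^*$-closed in $Y$ for every $SC^*$-closed set $M$ in $X$. *)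

From mathcomp Require Import all_boot all_classical.
From mathcomp Require Import topology.
Local Open Scope classical_set_scope.

Section SCstar.
Context {Z : topologicalType}.

Definition semi_open (A : set Z) : Prop := A `<=` closure (A^°).

Definition semi_closed (A : set Z) : Prop := semi_open (~` A).

Definition scl (A : set Z) : set Z :=
  \bigcap_(B in [set B | semi_closed B /\ A `<=` B]) B.

Definition cstar_open (A : set Z) : Prop :=
  (closure A)^° `<=` A /\ A `<=` closure (A^°).

Definition SCstar_closed (A : set Z) : Prop :=
  forall U : set Z, A `<=` U -> cstar_open U -> scl A `<=` U.

Definition SCstar_open (A : set Z) : Prop := SCstar_closed (~` A).

End SCstar.

Definition strongly_SCstar_closed {X Y : topologicalType} (f : X -> Y) : Prop :=
  forall M : set X, SCstar_closed M -> SCstar_closed (f @` M).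

(* Since [f @^-1` J `<=` M] holds exactly when [J `<=` ~` (f @` ~` M)], the set
   [~` (f @` ~` M)] is the largest one whose preimage lies in [M].  Taking it as
   [N] gives one direction; conversely, for [M] closed the [N] produced for
   [J := ~` (f @` M)] must equal [J], so [f @` M = ~` N] is closed.  Nothing
   about SC*-closed sets is used except that SC*-open sets are their
   complements. *)

From mathcomp Require Import all_boot all_classical.
From mathcomp Require Import topology.
Local Open Scope classical_set_scope.

Lemma preimage_sub_setC_image {X Y : Type} (f : X -> Y) (J : set Y) (M : set X) :
  f @^-1` J `<=` M <-> J `<=` ~` (f @` ~` M).
Proof. by rewrite subsetCPr image_sub -preimage_setC subsetCP. Qed.

Section ClosedImage.
Variables (X Y : Type) (f : X -> Y).
Variables (closedX : set X -> Prop) (closedY : set Y -> Prop).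

Lemma image_closed_iff_preimage_open :
  (forall M, closedX M -> closedY (f @` M)) <->
  (forall (J : set Y) (M : set X),
      closedX (~` M) -> f @^-1` J `<=` M ->
      exists N : set Y, closedY (~` N) /\ J `<=` N /\ f @^-1` N `<=` M).
Proof.
split=> [closed_image J M closedCM JM | open_nbhd M closedM].
- exists (~` (f @` ~` M)); split; [by rewrite setCK; apply: closed_image|split].
  + exact: (preimage_sub_setC_image f J M).1 JM.
  + exact: (preimage_sub_setC_image f _ M).2 (@subset_refl _ _).
- pose J := ~` (f @` M).
  have JM : f @^-1` J `<=` ~` M by apply/(preimage_sub_setC_image f J _).2; rewrite setCK.
  have closedCCM : closedX (~` ~` M) by rewrite setCK.
  have [N [closedCN [JN NM]]] := open_nbhd J (~` M) closedCCM JM.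
  have NJ : N `<=` J by move/(preimage_sub_setC_image f N _).1: NM; rewrite setCK.
  have -> : f @` M = ~` N.
    by rewrite -[f @` M]setCK; congr (~` _); apply/seteqP; split.
  exact: closedCN.
Qed.

End ClosedImage.

Theorem theorem3p3 (X Y : topologicalType) (f : X -> Y) :
  strongly_SCstar_closed f <->
  (forall (J : set Y) (M : set X),
      SCstar_open M -> f @^-1` J `<=` M ->
      exists N : set Y, SCstar_open N /\ J `<=` N /\ f @^-1` N `<=` M).
Proof. exact: image_closed_iff_preimage_open. Qed.
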